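(* Let $A=(A,\oplus,\odot)$ be a skew brace, $D$ a cyclic characteristic subgroup of $A_{\oplus}$, and $B=C_{A_{\oplus}}(D)$ the centralizer of $D$ in $A_{\oplus}$. For $x\in A$ denote by $\overline{x}$ the image of $x$ under the natural homomorphism $A_{\oplus}\to A_{\oplus}/B$. Then there exists a positive integer $m$ such that for all $a,b\in A_{\odot}^{(m)}$ the equalities $\overline{a\odot b}=\overline{a\oplus b}$ and $\overline{a^{-1}}=\overline{\ominus a}$ hold.
   Context: A skew brace is a set $A$ with two binary operations $\oplus,\odot$ such that $A_{\oplus}=(A,\oplus)$ and $A_{\odot}=(A,\odot)$ are groups and $a\odot(b\oplus c)=(a\odot b)\ominus a\oplus(a\odot c)$ for all $a,b,c\in A$, where $\ominus a$ is the inverse of $a$ in $A_{\oplus}$ and $a^{-1}$ is the inverse of $a$ in $A_{\odot}$. The derived series of a group $G$ is indexed by $G^{(1)}=G$, $G^{(i+1)}=[G^{(i)},G^{(i)}]$. The subgroup $D$ may be finite or infinite cyclic. *)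

(* skew braces may be infinite, so groups are given abstractly
   by a carrier type and explicit operations. *)
From Stdlib Require Import ZArith.

Section GroupDefs.
Variable T : Type.

Definition is_group (op : T -> T -> T) (e : T) (inv : T -> T) : Prop :=
  (forall x y z, op x (op y z) = op (op x y) z) /\
  (forall x, op e x = x) /\ (forall x, op x e = x) /\
  (forall x, op (inv x) x = e) /\ (forall x, op x (inv x) = e).

Definition is_skew_brace (add mul : T -> T -> T) (zero one : T)
  (neg inv : T -> T) : Prop :=
  is_group add zero neg /\ is_group mul one inv /\
  (forall a b c, mul a (add b c) = add (add (mul a b) (neg a)) (mul a c)).

Fixpoint npow (op : T -> T -> T) (e : T) (n : nat) (x : T) : T :=
  match n with O => e | S k => op x (npow op e k x) end.

Definition zpow (op : T -> T -> T) (e : T) (inv : T -> T) (z : Z) (x : T) : T :=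
  match z with
  | Z0 => e
  | Zpos p => npow op e (Pos.to_nat p) x
  | Zneg p => inv (npow op e (Pos.to_nat p) x)
  end.

Definition is_cyclic_subgroup (op : T -> T -> T) (e : T) (inv : T -> T)
  (D : T -> Prop) : Prop :=
  exists g, forall x, D x <-> exists z : Z, x = zpow op e inv z g.

Definition is_automorphism (op : T -> T -> T) (f : T -> T) : Prop :=
  (forall x y, f (op x y) = op (f x) (f y)) /\
  (forall x y, f x = f y -> x = y) /\ (forall y, exists x, f x = y).

Definition is_characteristic (op : T -> T -> T) (H : T -> Prop) : Prop :=
  forall f, is_automorphism op f ->
    forall y, H y <-> exists x, H x /\ f x = y.

Definition centralizer (op : T -> T -> T) (D : T -> Prop) (x : T) : Prop :=
  forall d, D d -> op x d = op d x.

(* images of x and y in the quotient (T,op)/B coincide: x^{-1} y \in B *)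
Definition same_coset (op : T -> T -> T) (inv : T -> T) (B : T -> Prop)
  (x y : T) : Prop := B (op (inv x) y).

Inductive gen (op : T -> T -> T) (e : T) (inv : T -> T) (S : T -> Prop)
  : T -> Prop :=
  | gen_in : forall x, S x -> gen op e inv S x
  | gen_e : gen op e inv S e
  | gen_op : forall x y, gen op e inv S x -> gen op e inv S y ->
      gen op e inv S (op x y)
  | gen_inv : forall x, gen op e inv S x -> gen op e inv S (inv x).

Definition comm (op : T -> T -> T) (inv : T -> T) (x y : T) : T :=
  op (op (inv x) (inv y)) (op x y).

Definition comm_subgroup (op : T -> T -> T) (e : T) (inv : T -> T)
  (H : T -> Prop) : T -> Prop :=
  gen op e inv (fun z => exists x y, H x /\ H y /\ z = comm op inv x y).

(* derived series, indexed from 1: G^(1) = G, G^(i+1) = [G^(i), G^(i)];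
   derived 0 is set (conventionally) to G as well. *)
Fixpoint derived (op : T -> T -> T) (e : T) (inv : T -> T) (n : nat)
  : T -> Prop :=
  match n with
  | O => fun _ => True
  | S k => match k with
           | O => fun _ => True
           | S _ => comm_subgroup op e inv (derived op e inv k)
           end
  end.

End GroupDefs.

Arguments is_group {T}.
Arguments is_skew_brace {T}.
Arguments npow {T}.
Arguments zpow {T}.
Arguments is_cyclic_subgroup {T}.
Arguments is_automorphism {T}.
Arguments is_characteristic {T}.
Arguments centralizer {T}.
Arguments same_coset {T}.
Arguments gen {T}.
Arguments comm {T}.
Arguments comm_subgroup {T}.
Arguments derived {T}.

From Stdlib Require Import ZArith.

(* Proof: take m = 2.  Since D = <g> is cyclic and characteristic, every
   automorphism of A_add maps g to a power of g, so any two automorphisms of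
   A_add commute on D.  The maps lambda_a b = -a + a*b are automorphisms of
   A_add with lambda_(a*b) = lambda_a o lambda_b, hence lambda_a fixes D
   pointwise for every a in [A_mul, A_mul].  An automorphism fixing a
   characteristic subgroup pointwise moves every x only inside its coset
   modulo the centralizer, and a*b = a + lambda_a b, -a = lambda_a (a^-1). *)

Section Group.
Context {T : Type} {op : T -> T -> T} {e : T} {inv : T -> T}.
Hypothesis G : is_group op e inv.

Lemma op_assoc x y z : op x (op y z) = op (op x y) z.
Proof. apply G. Qed.

Lemma op_e_l x : op e x = x.
Proof. apply G. Qed.

Lemma op_e_r x : op x e = x.
Proof. apply G. Qed.

Lemma op_inv_l x : op (inv x) x = e.
Proof. apply G. Qed.

Lemma op_inv_r x : op x (inv x) = e.
Proof. apply G. Qed.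

Lemma op_KV x y : op x (op (inv x) y) = y.
Proof. now rewrite op_assoc, op_inv_r, op_e_l. Qed.

Lemma op_VK x y : op (inv x) (op x y) = y.
Proof. now rewrite op_assoc, op_inv_l, op_e_l. Qed.

Lemma op_cancel_l x y z : op x y = op x z -> y = z.
Proof. intro H. now rewrite <- (op_VK x y), H, op_VK. Qed.

Lemma inv_unique x y : op x y = e -> y = inv x.
Proof. intro H. now rewrite <- (op_VK x y), H, op_e_r. Qed.

Lemma inv_inv x : inv (inv x) = x.
Proof. symmetry. apply inv_unique, op_inv_l. Qed.

Lemma inv_e : inv e = e.
Proof. symmetry. apply inv_unique, op_e_l. Qed.

Lemma inv_op x y : inv (op x y) = op (inv y) (inv x).
Proof.
  symmetry. apply inv_unique.
  now rewrite <- op_assoc, op_KV, op_inv_r.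
Qed.

Lemma npow_add n m x : npow op e (n + m) x = op (npow op e n x) (npow op e m x).
Proof.
  induction n as [|n IH]; simpl.
  - now rewrite op_e_l.
  - now rewrite IH, op_assoc.
Qed.

Lemma npow_mul n m x : npow op e (n * m) x = npow op e n (npow op e m x).
Proof. induction n as [|n IH]; simpl; [reflexivity | now rewrite npow_add, IH]. Qed.

Lemma npow_npow_comm n m x :
  npow op e n (npow op e m x) = npow op e m (npow op e n x).
Proof. now rewrite <- !npow_mul, Nat.mul_comm. Qed.

Lemma npow_commute n x : op x (npow op e n x) = op (npow op e n x) x.
Proof.
  induction n as [|n IH]; simpl.
  - now rewrite op_e_l, op_e_r.
  - now rewrite <- op_assoc, <- IH.
Qed.

Lemma npow_e n : npow op e n e = e.
Proof. induction n as [|n IH]; simpl; [reflexivity | now rewrite IH, op_e_l]. Qed.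

Lemma npow_inv n x : npow op e n (inv x) = inv (npow op e n x).
Proof.
  induction n as [|n IH]; simpl.
  - now rewrite inv_e.
  - now rewrite IH, <- inv_op, npow_commute.
Qed.

Lemma zpow_zpow_comm k l x :
  zpow op e inv l (zpow op e inv k x) = zpow op e inv k (zpow op e inv l x).
Proof.
  destruct k, l; unfold zpow;
    rewrite ?npow_e, ?inv_e, ?npow_inv, ?inv_inv;
    try rewrite npow_npow_comm; reflexivity.
Qed.

Section Morphism.
Variable f : T -> T.
Hypothesis f_op : forall x y, f (op x y) = op (f x) (f y).

Lemma morph_e : f e = e.
Proof. symmetry. apply (op_cancel_l (f e)). now rewrite <- f_op, !op_e_r. Qed.

Lemma morph_inv x : f (inv x) = inv (f x).
Proof. apply inv_unique. now rewrite <- f_op, op_inv_r, morph_e. Qed.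

Lemma morph_npow n x : f (npow op e n x) = npow op e n (f x).
Proof.
  induction n as [|n IH]; simpl; [apply morph_e | now rewrite f_op, IH].
Qed.

Lemma morph_zpow z x : f (zpow op e inv z x) = zpow op e inv z (f x).
Proof.
  destruct z; unfold zpow; [apply morph_e | apply morph_npow |].
  now rewrite morph_inv, morph_npow.
Qed.

End Morphism.

Lemma characteristic_stable H f d :
  is_characteristic op H -> is_automorphism op f -> H d -> H (f d).
Proof. intros Hchar Hf Hd. apply (Hchar f Hf). eauto. Qed.

(* The generator g goes to powers g^k and g^l, and powers of g commute. *)
Lemma automorphisms_commute_on_cyclic_characteristic D f h d :
  is_cyclic_subgroup op e inv D -> is_characteristic op D ->
  is_automorphism op f -> is_automorphism op h -> D d -> f (h d) = h (f d).
Proof.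
  intros [g Dg_iff] Dchar Hf Hh Dd.
  pose proof (proj1 Hf) as f_op. pose proof (proj1 Hh) as h_op.
  assert (Dg : D g) by (apply Dg_iff; exists 1%Z; simpl; now rewrite op_e_r).
  destruct (proj1 (Dg_iff d) Dd) as [z ->].
  destruct (proj1 (Dg_iff (f g)) (characteristic_stable D f g Dchar Hf Dg))
    as [k fg].
  destruct (proj1 (Dg_iff (h g)) (characteristic_stable D h g Dchar Hh Dg))
    as [l hg].
  rewrite (morph_zpow h h_op), (morph_zpow f f_op), (morph_zpow f f_op),
    (morph_zpow h h_op), hg, fg, (morph_zpow f f_op), (morph_zpow h h_op),
    hg, fg.
  f_equal. apply zpow_zpow_comm.
Qed.

Lemma conjugation_automorphism b :
  is_automorphism op (fun x => op b (op x (inv b))).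
Proof.
  split; [| split].
  - intros x y. now rewrite <- !op_assoc, op_VK.
  - intros x y Hxy.
    apply (f_equal (fun z => op (inv b) (op z b))) in Hxy.
    now rewrite <- !op_assoc, !op_VK, !op_inv_l, !op_e_r in Hxy.
  - intro y. exists (op (inv b) (op y b)).
    now rewrite <- !op_assoc, op_KV, op_inv_r, op_e_r.
Qed.

Lemma same_coset_op_l B a x y :
  same_coset op inv B x y -> same_coset op inv B (op a x) (op a y).
Proof. unfold same_coset. now rewrite inv_op, <- op_assoc, op_VK. Qed.

(* [x d x^-1] lies in H, so f fixes it: f x and x conjugate each d alike. *)
Lemma same_coset_automorphism_fixing_characteristic H f x :
  is_characteristic op H -> is_automorphism op f ->
  (forall d, H d -> f d = d) -> same_coset op inv (centralizer op H) x (f x).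
Proof.
  intros Hchar Hf f_fix d Hd.
  pose proof (proj1 Hf) as f_op.
  assert (conj_fixed : op (f x) (op d (inv (f x))) = op x (op d (inv x))).
  { rewrite <- (f_fix d Hd) at 1. rewrite <- (morph_inv f f_op), <- !f_op.
    apply f_fix, (characteristic_stable H _ d Hchar (conjugation_automorphism x) Hd). }
  apply (op_cancel_l x). rewrite <- !op_assoc, op_KV.
  apply (f_equal (fun y => op y (f x))) in conj_fixed.
  now rewrite <- !op_assoc, op_inv_l, op_e_r in conj_fixed.
Qed.

End Group.

Section SkewBrace.
Context {A : Type} {add mul : A -> A -> A} {zero one : A} {neg inv : A -> A}.
Hypothesis HA : is_skew_brace add mul zero one neg inv.

Let Gadd : is_group add zero neg := proj1 HA.
Let Gmul : is_group mul one inv := proj1 (proj2 HA).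
Let brace a b c : mul a (add b c) = add (add (mul a b) (neg a)) (mul a c) :=
  proj2 (proj2 HA) a b c.

Definition lambda a b := add (neg a) (mul a b).

Lemma skew_brace_zero_one : zero = one.
Proof.
  pose proof (brace one zero zero) as H.
  rewrite (op_e_l Gadd), (op_e_l Gmul), (op_e_r Gadd), (op_e_l Gadd) in H.
  now rewrite <- (inv_inv Gadd one), <- H, (inv_e Gadd).
Qed.

Lemma mul_add_lambda a b : mul a b = add a (lambda a b).
Proof. unfold lambda. now rewrite (op_KV Gadd). Qed.

Lemma lambda_inv a : lambda a (inv a) = neg a.
Proof.
  unfold lambda. now rewrite (op_inv_r Gmul), <- skew_brace_zero_one, (op_e_r Gadd).
Qed.

Lemma lambda_add a x y : lambda a (add x y) = add (lambda a x) (lambda a y).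
Proof. unfold lambda. now rewrite brace, <- !(op_assoc Gadd). Qed.

(* Brace identity at [c := -b], where [a * 0 = a] because [0 = 1]. *)
Lemma mul_neg a b : mul a (neg b) = add a (add (neg (mul a b)) a).
Proof.
  pose proof (brace a b (neg b)) as H.
  rewrite (op_inv_r Gadd), skew_brace_zero_one, (op_e_r Gmul) in H.
  rewrite <- (op_VK Gadd (add (mul a b) (neg a)) (mul a (neg b))), <- H.
  now rewrite (inv_op Gadd), (inv_inv Gadd), <- (op_assoc Gadd).
Qed.

Lemma lambda_mul a b c : lambda (mul a b) c = lambda a (lambda b c).
Proof.
  unfold lambda.
  rewrite brace, mul_neg, <- !(op_assoc Gadd), (op_VK Gadd), (op_KV Gadd),
    (op_assoc Gmul).
  reflexivity.
Qed.

Lemma lambda_one c : lambda one c = c.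
Proof.
  unfold lambda. now rewrite (op_e_l Gmul), <- skew_brace_zero_one, (inv_e Gadd),
    (op_e_l Gadd).
Qed.

Lemma lambda_invK a c : lambda (inv a) (lambda a c) = c.
Proof. now rewrite <- lambda_mul, (op_inv_l Gmul), lambda_one. Qed.

Lemma lambda_automorphism a : is_automorphism add (lambda a).
Proof.
  split; [apply lambda_add | split].
  - intros x y H. now rewrite <- (lambda_invK a x), H, lambda_invK.
  - intro y. exists (lambda (inv a) y).
    rewrite <- (inv_inv Gmul a) at 1. apply lambda_invK.
Qed.

Lemma lambda_comm_subgroup_fix (D S : A -> Prop) :
  (forall x y d, D d -> lambda x (lambda y d) = lambda y (lambda x d)) ->
  forall a, comm_subgroup mul one inv S a -> forall d, D d -> lambda a d = d.
Proof.
  intros lambda_comm a Ha.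
  induction Ha as [c [x [y [_ [_ ->]]]] | | x y _ IHx _ IHy | x _ IHx];
    intros d Dd.
  - unfold comm. rewrite !lambda_mul, (lambda_comm x y d Dd).
    now rewrite !lambda_invK.
  - apply lambda_one.
  - now rewrite lambda_mul, IHy, IHx.
  - now rewrite <- (IHx d Dd) at 1; rewrite lambda_invK.
Qed.

End SkewBrace.

Arguments lambda {A} add mul neg a b.

Theorem proposition4p4 (A : Type) (add mul : A -> A -> A) (zero one : A)
  (neg inv : A -> A)
  (HA : is_skew_brace add mul zero one neg inv)
  (D : A -> Prop)
  (HDcyc : is_cyclic_subgroup add zero neg D)
  (HDchar : is_characteristic add D) :
  exists m : nat, (0 < m)%nat /\
    forall a b : A,
      derived mul one inv m a -> derived mul one inv m b ->
      same_coset add neg (centralizer add D) (mul a b) (add a b) /\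
      same_coset add neg (centralizer add D) (inv a) (neg a).
Proof.
  pose proof (proj1 HA) as Gadd.
  exists 2. split; [repeat constructor |].
  intros a b Ha _.
  assert (lambda_same_coset : forall c, derived mul one inv 2 c ->
            forall x, same_coset add neg (centralizer add D) x (lambda add mul neg c x)).
  { intros c Hc x.
    apply (same_coset_automorphism_fixing_characteristic Gadd); trivial.
    - apply (lambda_automorphism HA).
    - apply (lambda_comm_subgroup_fix HA D (fun _ => True)); [| exact Hc].
      intros y z d Dd.
      apply (automorphisms_commute_on_cyclic_characteristic Gadd D); trivial;
        apply (lambda_automorphism HA). }
  split.
  - rewrite (mul_add_lambda HA). apply (same_coset_op_l Gadd).
    rewrite <- (lambda_invK HA a b) at 2.
    apply lambda_same_coset, gen_inv, Ha.
  - rewrite <- (lambda_inv HA). apply lambda_same_coset, Ha.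
Qed.
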